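(* Let $A\in\mathbb{R}^{n\times m}$ with $n<m$ have nonzero columns $\alpha_1,\dots,\alpha_m$, let $c_{ij}=\langle\alpha_i,\alpha_j\rangle$, and for each $i\in[m]$ define $\nu(i)=\max_{j\neq i}\frac{|c_{ij}|}{c_{ii}}$ and $\rho(i)=\frac{\nu(i)}{\nu(i)+1}$. Let $\rho(i_1)\ge\rho(i_2)\ge\dots\ge\rho(i_m)$ be these scores sorted in non-increasing order, and let $l^*$ be the largest integer $l\in\{0,1,\dots,m\}$ such that $\sum_{j=1}^{l}\rho(i_j)<\frac12$ (equivalently, when it exists, $l^*=\min\{l:\sum_{j=1}^l\rho(i_j)\ge\frac12\}-1$). Then every $x\in\mathbb{R}^m$ with $\|x\|_0\le l^*$ is the unique minimizer of $\min_{z\in\mathbb{R}^m}\|z\|_1$ subject to $Az=Ax$; that is, the sparsity level $SL$ of $\ell_1$ minimization with sensing matrix $A$ satisfies $SL\ge l^*$.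
   Context: $[m]=\{1,\dots,m\}$; $\|x\|_0$ is the number of nonzero entries of $x$. The sparsity level $SL$ of $A$ is the largest integer $s$ such that every $x$ with $\|x\|_0\le s$ is correctly (uniquely) recovered as the minimizer of $\min\|z\|_1$ s.t. $Az=Ax$. *)

From mathcomp Require Import all_boot all_order all_algebra.
From mathcomp Require Import reals.
Set Implicit Arguments. Unset Strict Implicit. Unset Printing Implicit Defensive.
Import Order.TTheory GRing.Theory Num.Theory.
Local Open Scope ring_scope.

Section Defs.
Variables (R : realType) (n m : nat).

Definition gram (A : 'M[R]_(n, m)) (i j : 'I_m) : R :=
  \sum_(k < n) A k i * A k j.

(* nu(i) = max_{j <> i} |c_ij| / c_ii  (values are >= 0, so 0 is a neutral
   element for the max over the nonempty index set) *)
Definition nu (A : 'M[R]_(n, m)) (i : 'I_m) : R :=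
  \big[Num.max/0]_(j < m | j != i) (`|gram A i j| / gram A i i).

Definition rho (A : 'M[R]_(n, m)) (i : 'I_m) : R := nu A i / (nu A i + 1).

Definition sorted_rho (A : 'M[R]_(n, m)) : seq R :=
  sort (fun a b : R => b <= a) [seq rho A i | i <- enum 'I_m].

Definition lstar (A : 'M[R]_(n, m)) : nat :=
  \max_(l < m.+1 | \sum_(r <- take l (sorted_rho A)) r < 2^-1) l.

Definition l0norm (x : 'cV[R]_m) : nat := #|[set i : 'I_m | x i 0 != 0]|.
Definition l1norm (x : 'cV[R]_m) : R := \sum_(i < m) `|x i 0|.

End Defs.

From mathcomp Require Import all_boot all_order all_algebra.
From mathcomp Require Import reals.
From mathcomp Require Import lra.
Import Order.TTheory GRing.Theory Num.Theory.
Local Open Scope ring_scope.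

(* For [h] in the kernel of [A], the [i]-th row of [A^T A h = 0] gives
   [c_ii |h_i| <= nu(i) c_ii (|h|_1 - |h_i|)], i.e. [|h_i| <= rho(i) |h|_1].
   Summing over the support [S] of [x] and bounding by the [l^*] largest
   scores yields the null space property [2 sum_(i in S) |h_i| < |h|_1] for
   every nonzero [h] in the kernel, and that forces [|x + h|_1 > |x|_1]. *)

Section PrefixSums.
Context {R : realDomainType}.
Implicit Types (a : R) (t u : seq R).

Lemma sum_take_succ_le a u k : 0 <= a -> all (fun y => y <= a) u ->
  \sum_(r <- take k.+1 u) r <= a + \sum_(r <- take k u) r.
Proof.
move=> a_ge0; elim: u k => [|b u IHu] k /=; first by rewrite !big_nil addr0.
case/andP=> b_le_a u_le_a; case: k => [|k].
  by rewrite take0 big_cons !big_nil !addr0.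
by rewrite [take _.+1 _]/= !big_cons addrCA lerD2l IHu.
Qed.

Lemma sum_take_le_take u k l : all (fun y => 0 <= y) u -> (k <= l)%N ->
  \sum_(r <- take k u) r <= \sum_(r <- take l u) r.
Proof.
move=> u_ge0 le_kl; rewrite -(take_takel u le_kl).
rewrite -{2}(cat_take_drop k (take l u)) big_cat lerDl /=.
rewrite big_seq; apply: sumr_ge0 => r /mem_drop/mem_take r_u.
exact: (allP u_ge0).
Qed.

Lemma sum_subseq_le_sum_take {u t} : sorted >=%R u -> all (fun y => 0 <= y) u ->
  subseq t u -> \sum_(r <- t) r <= \sum_(r <- take (size t) u) r.
Proof.
elim: u t => [|a u IHu] t /=; first by move=> _ _ /eqP->.
move=> sorted_au /andP[a_ge0 u_ge0]; have sorted_u := path_sorted sorted_au.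
case: t => [|b t] /=; first by rewrite !big_nil.
have u_le_a : all (fun y => y <= a) u.
  exact: order_path_min ge_trans sorted_au.
case: eqP => [-> t_u | _ bt_u].
  by rewrite !big_cons lerD2l IHu.
apply: le_trans (IHu _ sorted_u u_ge0 bt_u) _.
by rewrite big_cons sum_take_succ_le.
Qed.

End PrefixSums.

Section NullSpaceProperty.
Context {R : realType} {m : nat}.
Implicit Types (x h : 'cV[R]_m) (S : {set 'I_m}).

Lemma l1norm_gt0 h : h != 0 -> 0 < l1norm h.
Proof.
move=> h_neq0; rewrite lt_def sumr_ge0 ?andbT //; apply: contra h_neq0.
move/eqP/psumr_eq0P => h0; apply/eqP/matrixP => i j.
by rewrite (ord1 j) mxE; apply/eqP; rewrite -normr_eq0 h0.
Qed.

Lemma l1norm_lt_addr x h S : (forall i, i \notin S -> x i 0 = 0) ->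
  2 * \sum_(i in S) `|h i 0| < l1norm h -> l1norm x < l1norm (x + h).
Proof.
move=> x_supp hS_small.
have x_offS : \sum_(i | i \notin S) `|x i 0| = 0.
  by rewrite big1 // => i /x_supp ->; rewrite normr0.
have xh_onS : \sum_(i in S) (`|x i 0| - `|h i 0|) <= \sum_(i in S) `|(x + h) i 0|.
  by apply: ler_sum => i _; rewrite mxE lerB_normD.
have xh_offS : \sum_(i | i \notin S) `|(x + h) i 0| = \sum_(i | i \notin S) `|h i 0|.
  by apply: eq_bigr => i /x_supp x0; rewrite mxE x0 add0r.
move: hS_small xh_onS; rewrite /l1norm sumrB !(bigID (mem S) xpredT) /=.
lra.
Qed.

End NullSpaceProperty.

Section Coherence.
Context {R : realType} {n m : nat} (A : 'M[R]_(n, m)).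

Lemma gramE i j : gram A i j = (A^T *m A) i j.
Proof. by rewrite mxE; apply: eq_bigr => k _; rewrite mxE. Qed.

Lemma gram_diag_gt0 i : col i A != 0 -> 0 < gram A i i.
Proof.
have sq_ge0 k : true -> 0 <= A k i * A k i by rewrite -expr2 sqr_ge0.
move=> col_neq0; rewrite lt_def sumr_ge0 ?andbT //.
apply: contra col_neq0 => /eqP/(psumr_eq0P sq_ge0) gram0.
apply/eqP/matrixP => k l; rewrite !mxE.
by have /eqP := gram0 k isT; rewrite mulf_eq0 orbb => /eqP.
Qed.

Lemma nu_ge0 i : 0 <= nu A i.
Proof. exact: bigmax_ge_id. Qed.

Lemma rho_ge0 i : 0 <= rho A i.
Proof. by rewrite divr_ge0 ?addr_ge0 ?nu_ge0. Qed.

Lemma kernel_gram_row (h : 'cV[R]_m) i : A *m h = 0 ->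
  \sum_j gram A i j * h j 0 = 0.
Proof.
move=> Ah0; transitivity ((A^T *m A *m h) i 0).
  by rewrite mxE; apply: eq_bigr => j _; rewrite gramE.
by rewrite -mulmxA Ah0 mulmx0 mxE.
Qed.

Lemma kernel_coord_le_nu (h : 'cV[R]_m) i : A *m h = 0 -> col i A != 0 ->
  `|h i 0| <= nu A i * \sum_(j | j != i) `|h j 0|.
Proof.
move=> Ah0 /gram_diag_gt0 cii_gt0.
have row_i := kernel_gram_row _ i Ah0; rewrite (bigD1 i) //= in row_i.
move/eqP: row_i; rewrite addr_eq0 => /eqP cii_hi.
have -> : h i 0 = - (\sum_(j | j != i) gram A i j * h j 0) / gram A i i.
  by rewrite -cii_hi mulrC mulKf ?gt_eqF.
rewrite normrM normrN normfV (gtr0_norm cii_gt0) ler_pdivrMr //.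
rewrite mulrAC mulr_sumr; apply: le_trans (ler_norm_sum _ _ _) _.
apply: ler_sum => j ji; rewrite normrM ler_wpM2r // -ler_pdivrMr //.
exact: le_bigmax_cond.
Qed.

Lemma kernel_coord_le_rho (h : 'cV[R]_m) i : A *m h = 0 -> col i A != 0 ->
  `|h i 0| <= rho A i * l1norm h.
Proof.
move=> Ah0 col_neq0; have hi_le := kernel_coord_le_nu h i Ah0 col_neq0.
have nu_ge0 := nu_ge0 i; have nu1_gt0 : 0 < nu A i + 1 by rewrite ltr_wpDl.
rewrite /rho /l1norm (bigD1 i) //= mulrAC ler_pdivlMr //.
move: hi_le; set rest := \sum_(j | j != i) _; nra.
Qed.

Lemma sum_take_lstar_lt_half :
  \sum_(r <- take (lstar A) (sorted_rho A)) r < 2^-1.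
Proof.
pose P (l : 'I_m.+1) := \sum_(r <- take l (sorted_rho A)) r < 2^-1.
have P0 : (0 < #|P|)%N.
  by apply/card_gt0P; exists ord0; rewrite unfold_in /P take0 big_nil invr_gt0.
have [l Pl lstar_l] := eq_bigmax_cond (fun l : 'I_m.+1 => nat_of_ord l) P0.
by have -> : lstar A = l := lstar_l.
Qed.

Lemma sum_rho_lt_half (S : {set 'I_m}) : (#|S| <= lstar A)%N ->
  \sum_(i in S) rho A i < 2^-1.
Proof.
move=> S_small; apply: le_lt_trans sum_take_lstar_lt_half.
have sorted_rho_ge0 : all (fun y => 0 <= y) (sorted_rho A).
  by rewrite all_sort all_map; apply/allP => i _; exact: rho_ge0.
have rhoS_sub : subseq (sort >=%R [seq rho A i | i <- enum S]) (sorted_rho A).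
  apply: subseq_sort; [exact: ge_total | exact: ge_trans |].
  by apply: map_subseq; rewrite enumT; exact: filter_subseq.
rewrite -big_enum -(big_map (rho A) xpredT id).
rewrite -(perm_big _ (permEl (perm_sort >=%R _))).
have rho_sorted : sorted >=%R (sorted_rho A) := sort_sorted ge_total _.
apply: le_trans (sum_subseq_le_sum_take rho_sorted sorted_rho_ge0 rhoS_sub) _.
by rewrite size_sort size_map -cardE sum_take_le_take.
Qed.

End Coherence.

Theorem corollary1 (R : realType) (n m : nat) (A : 'M[R]_(n, m)) :
  (n < m)%N ->
  (forall j : 'I_m, col j A != 0) ->
  forall x : 'cV[R]_m, (l0norm x <= lstar A)%N ->
  forall z : 'cV[R]_m, A *m z = A *m x -> z != x -> l1norm x < l1norm z.
Proof.
move=> _ cols_neq0 x x_sparse z Az_eq z_neq_x.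
pose h := z - x; pose S := [set i | x i 0 != 0].
have -> : z = x + h by rewrite addrC subrK.
have Ah0 : A *m h = 0 by rewrite mulmxBr Az_eq subrr.
apply: (l1norm_lt_addr x h S) => [i | ].
  by rewrite inE negbK => /eqP.
have h_gt0 : 0 < l1norm h by rewrite l1norm_gt0 // subr_eq0.
have rhoS_lt := sum_rho_lt_half A S x_sparse.
have rhoS_ge0 : 0 <= \sum_(i in S) rho A i by rewrite sumr_ge0 // => i _; exact: rho_ge0.
have hS_le : \sum_(i in S) `|h i 0| <= (\sum_(i in S) rho A i) * l1norm h.
  by rewrite mulr_suml; apply: ler_sum => i _; exact: kernel_coord_le_rho.
nra.
Qed.
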